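(* For any two knots $K_1,K_2\subset S^3$, $\delta(K_1\# K_2)=\delta(K_1)\delta(K_2)$. Furthermore, \[ b_{\mathrm{e}}(K_1\# K_2)=b_{\mathrm{e}}(K_1)+b_{\mathrm{e}}(K_2)+\tfrac14(\delta(K_1)-1)(\delta(K_2)-1),\] \[ b_{\mathrm{o}}(K_1\# K_2)=b_{\mathrm{o}}(K_1)+b_{\mathrm{o}}(K_2)+\tfrac14(\delta(K_1)-1)(\delta(K_2)-1).\]
   Context: For a knot $K\subset S^3$, $\widehat{\mathrm{CFK}}(K)$ denotes the (hat) knot Floer chain complex with coefficients in $\mathbb{F}_2$: a finite-dimensional, graded, filtered chain complex (differential lowering grading by one, not increasing filtration level), well defined up to filtered chain homotopy equivalence; its unfiltered homology is one-dimensional, in grading $0$, and $\widehat{\mathrm{CFK}}(K_1\# K_2)\simeq \widehat{\mathrm{CFK}}(K_1)\otimes\widehat{\mathrm{CFK}}(K_2)$. A bar $(T\to B)$ is a two-dimensional complex with homogeneous basis $T,B$, $\partial T=B$, and filtration level of $B$ strictly less than that of $T$; it is even or odd according as the grading of $B$ is even or odd. A bar-complex is a complex together with a direct sum decomposition into one-dimensional complexes and bars. Every finite-dimensional graded filtered complex over $\mathbb{F}_2$ is filtered chain homotopy equivalent to a bar-complex, which is unique up to isomorphism. Let $\widehat{C}(K)$ be the bar-complex representative of $\widehat{\mathrm{CFK}}(K)$. Define $\delta(K)=\dim\widehat{C}(K)$ (equal to the total dimension of knot Floer homology $\widehat{\mathrm{HFK}}(K)$), and let $b_{\mathrm{e}}(K)$,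 $b_{\mathrm{o}}(K)$ be the numbers of even and odd bars in $\widehat{C}(K)$; thus $\delta(K)=1+2(b_{\mathrm{e}}(K)+b_{\mathrm{o}}(K))$. *)

From mathcomp Require Import all_boot all_algebra.
Set Implicit Arguments. Unset Strict Implicit. Unset Printing Implicit Defensive.
Import GRing.Theory Num.Theory.
Local Open Scope ring_scope.

(* A finite-dimensional graded filtered chain complex over F_2, presented by a
   homogeneous filtered basis [gen] (each generator has a (Maslov) grading [gr]
   and a filtration level [flv]); [dif x y] is the coefficient of [y] in [d x]. *)
Record cx := Cx {
  gen : finType;
  gr : gen -> int;
  flv : gen -> int;
  dif : gen -> gen -> 'F_2 }.
Arguments gr : clear implicits.
Arguments flv : clear implicits.
Arguments dif : clear implicits.

Definition mcomp (T U V : finType) (f : T -> U -> 'F_2) (g : U -> V -> 'F_2)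
  : T -> V -> 'F_2 := fun x z => \sum_(y : U) f x y * g y z.

Definition idm (T : finType) : T -> T -> 'F_2 := fun x y => (x == y)%:R.

Definition is_cx (C : cx) : Prop :=
  (forall x y : gen C, dif C x y != 0 ->
      gr C y = gr C x - 1 /\ (flv C y <= flv C x)%R) /\
  (forall x z : gen C, mcomp (dif C) (dif C) x z = 0).

Definition fmap (C C' : cx) (f : gen C -> gen C' -> 'F_2) : Prop :=
  (forall x y, f x y != 0 -> gr C' y = gr C x /\ (flv C' y <= flv C x)%R) /\
  (forall x z, mcomp (dif C) f x z = mcomp f (dif C') x z).

Definition fhtpy (C : cx) (h : gen C -> gen C -> 'F_2) : Prop :=
  forall x y, h x y != 0 -> gr C y = gr C x + 1 /\ (flv C y <= flv C x)%R.

Definition fhe (C C' : cx) : Prop :=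
  exists (f : gen C -> gen C' -> 'F_2) (g : gen C' -> gen C -> 'F_2)
         (h : gen C -> gen C -> 'F_2) (h' : gen C' -> gen C' -> 'F_2),
    [/\ fmap f, fmap g, fhtpy h & fhtpy h'] /\
    (forall x z, idm x z - mcomp f g x z =
                 mcomp (dif C) h x z + mcomp h (dif C) x z) /\
    (forall x z, idm x z - mcomp g f x z =
                 mcomp (dif C') h' x z + mcomp h' (dif C') x z).

(* tensor product of complexes (over F_2, no signs needed) *)
Definition tensor (C1 C2 : cx) : cx :=
  @Cx (gen C1 * gen C2)%type
      (fun p => gr C1 p.1 + gr C2 p.2)
      (fun p => flv C1 p.1 + flv C2 p.2)
      (fun p q => dif C1 p.1 q.1 * (p.2 == q.2)%:R + (p.1 == q.1)%:R * dif C2 p.2 q.2).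

Definition difmx (C : cx) : 'M['F_2]_#|gen C| :=
  \matrix_(i, j) dif C (enum_val i) (enum_val j).

Definition grproj (C : cx) (g : int) : 'M['F_2]_#|gen C| :=
  \matrix_(i, j) ((i == j) && (gr C (enum_val i) == g))%:R.

(* dimension of the (unfiltered) homology in grading g:
   dim C_g - rank (d restricted to C_g) - dim (im d /\ C_g) *)
Definition homdim (C : cx) (g : int) : nat :=
  (#|[pred x : gen C | gr C x == g]| - \rank (grproj C g *m difmx C)
     - \rank (difmx C *m grproj C g))%N.

(* bar-complex in basis form: a direct sum of one-dimensional complexes and
   bars (T -> B) with filtration of B strictly less than that of T *)
Definition is_barcx (B : cx) : Prop :=
  [/\ is_cx B,
      (forall x y, dif B x y != 0 -> (flv B y < flv B x)%R),
      (forall x y z, dif B x y != 0 -> dif B x z != 0 -> y = z),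
      (forall x y z, dif B x z != 0 -> dif B y z != 0 -> x = y) &
      (forall x y z, dif B x y != 0 -> dif B z x = 0 /\ dif B y z = 0)].

(* delta = total dimension; bars are counted via their bottom generator *)
Definition delta (B : cx) : nat := #|gen B|.
Definition bars_e (B : cx) : nat :=
  #|[pred y : gen B | [exists x, dif B x y != 0] && ~~ odd `|gr B y|%N]|.
Definition bars_o (B : cx) : nat :=
  #|[pred y : gen B | [exists x, dif B x y != 0] && odd `|gr B y|%N]|.

(* A filtered chain homotopy equivalence between reduced complexes (whose
   differential strictly lowers the filtration) restricts, on the parts of the
   maps that preserve the filtration level, to an isomorphism; since these parts
   preserve the grading, such complexes have the same number of generators in
   every grading.  Bar complexes are reduced, and so is the tensor product of
   two of them, so the bar complex of K1 # K2 and the tensor product of the bar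
   complexes of K1 and K2 have the same graded dimensions.

   A homotopy equivalence also preserves homology, so a bar complex of a knot has
   exactly one generator outside the bars, in grading 0, and every bar occupies
   two consecutive gradings.  Hence delta = 1 + 2 (b_e + b_o), the Euler
   characteristic sum (-1)^gr is 1, and sum (-1)^gr gr = b_o - b_e.  The last
   sum is, up to sign, the derivative at t = -1 of the Poincare polynomial,
   which is multiplicative under tensor products; by the product rule it is
   additive under connected sum.  Together with delta(K1 # K2) =
   delta(K1) delta(K2) this determines b_e and b_o of the connected sum. *)

From mathcomp Require Import all_boot all_order all_algebra ring zify lra.
Set Implicit Arguments. Unset Strict Implicit. Unset Printing Implicit Defensive.
Import Order.TTheory GRing.Theory Num.Theory.
Local Open Scope ring_scope.

Definition coefmx (R : Type) (T U : finType) (f : T -> U -> R) : 'M[R]_(#|T|, #|U|) :=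
  \matrix_(i, j) f (enum_val i) (enum_val j).

Lemma sum_enum_rank (R : nmodType) (U : finType) (F : 'I_#|U| -> R) :
  \sum_(j < #|U|) F j = \sum_(y : U) F (enum_rank y).
Proof. by rewrite (reindex enum_rank) //; exact/onW_bij/enum_rank_bij. Qed.

Lemma eq_coefmx (R : Type) (T U : finType) (f g : T -> U -> R) :
  (forall x y, f x y = g x y) -> coefmx f = coefmx g.
Proof. by move=> fg; apply/matrixP => i j; rewrite !mxE fg. Qed.

Lemma coefmxD (R : nmodType) (T U : finType) (f g : T -> U -> R) :
  coefmx (fun x y => f x y + g x y) = coefmx f + coefmx g.
Proof. by apply/matrixP => i j; rewrite !mxE. Qed.

Lemma coefmxB (R : zmodType) (T U : finType) (f g : T -> U -> R) :
  coefmx (fun x y => f x y - g x y) = coefmx f - coefmx g.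
Proof. by apply/matrixP => i j; rewrite !mxE. Qed.

Lemma coefmx_tr (R : Type) (T U : finType) (f : T -> U -> R) :
  (coefmx f)^T = coefmx (fun y x => f x y).
Proof. by apply/matrixP => i j; rewrite !mxE. Qed.

Lemma coefmx_mcomp (T U V : finType) (f : T -> U -> 'F_2) (g : U -> V -> 'F_2) :
  coefmx (mcomp f g) = coefmx f *m coefmx g.
Proof.
apply/matrixP => i k; rewrite !mxE sum_enum_rank.
by apply: eq_bigr => y _; rewrite !mxE enum_rankK.
Qed.

Lemma coefmx_idm (T : finType) : coefmx (@idm T) = 1%:M.
Proof. by apply/matrixP => i j; rewrite !mxE /idm (inj_eq enum_val_inj). Qed.

(** * Homotopy equivalences of matrix complexes *)

Section HomotopyEquivalence.
Variable R : pzRingType.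

Definition htpy_equiv m n (D : 'M[R]_m) (D' : 'M[R]_n) (F : 'M_(m, n)) (G : 'M_(n, m))
    (H : 'M_m) (H' : 'M_n) :=
  [/\ D *m F = F *m D', D' *m G = G *m D,
      1%:M - F *m G = D *m H + H *m D & 1%:M - G *m F = D' *m H' + H' *m D'].

Lemma htpy_equiv_sym m n D D' F G H H' :
  @htpy_equiv m n D D' F G H H' -> htpy_equiv D' D G F H' H.
Proof. by case. Qed.

Lemma htpy_id_comp m n p (D : 'M[R]_m) (D' : 'M[R]_n)
    F1 G1 H1 (F2 : 'M_(n, p)) (G2 : 'M_(p, n)) K :
  D *m F1 = F1 *m D' -> D' *m G1 = G1 *m D ->
  1%:M - F1 *m G1 = D *m H1 + H1 *m D -> 1%:M - F2 *m G2 = D' *m K + K *m D' ->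
  1%:M - (F1 *m F2) *m (G2 *m G1) =
    D *m (H1 + F1 *m K *m G1) + (H1 + F1 *m K *m G1) *m D.
Proof.
move=> cF1 cG1 eH1 eK.
have -> : 1%:M - (F1 *m F2) *m (G2 *m G1) =
    (1%:M - F1 *m G1) + F1 *m (1%:M - F2 *m G2) *m G1.
  by rewrite mulmxBr mulmxBl mulmx1 !mulmxA addrA addrNK.
rewrite eH1 eK mulmxDr !mulmxDl !mulmxDr !mulmxA cF1.
by rewrite -[F1 *m K *m D' *m G1]mulmxA cG1 !mulmxA addrACA.
Qed.

Lemma htpy_equiv_comp m n p (D : 'M[R]_m) (D' : 'M[R]_n) (D'' : 'M[R]_p)
    F1 G1 H1 H1' F2 G2 K K' :
  htpy_equiv D D' F1 G1 H1 H1' -> htpy_equiv D' D'' F2 G2 K K' ->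
  htpy_equiv D D'' (F1 *m F2) (G2 *m G1)
    (H1 + F1 *m K *m G1) (K' + G2 *m H1' *m F2).
Proof.
case=> cF1 cG1 eH1 eH1' [cF2 cG2 eK eK']; split.
- by rewrite mulmxA cF1 -mulmxA cF2 mulmxA.
- by rewrite mulmxA cG2 -mulmxA cG1 mulmxA.
- exact: htpy_id_comp cF1 cG1 eH1 eK.
- exact: htpy_id_comp cG2 cF2 eK' eH1'.
Qed.

End HomotopyEquivalence.

(** * Kronecker products *)

Section Kronecker.
Variable R : comPzRingType.

Definition kronmx (T1 T2 U1 U2 : finType)
    (A : 'M[R]_(#|T1|, #|U1|)) (B : 'M[R]_(#|T2|, #|U2|)) :
    'M[R]_(#|{: T1 * T2}|, #|{: U1 * U2}|) :=
  coefmx (fun p q => A (enum_rank p.1) (enum_rank q.1) * B (enum_rank p.2) (enum_rank q.2)).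

Variables T1 T2 U1 U2 V1 V2 : finType.
Implicit Types (A : 'M[R]_(#|T1|, #|U1|)) (B : 'M[R]_(#|T2|, #|U2|)).

Lemma coefmx_kron (f : T1 -> U1 -> R) (g : T2 -> U2 -> R) :
  coefmx (fun p q => f p.1 q.1 * g p.2 q.2) = kronmx (coefmx f) (coefmx g).
Proof. by apply/matrixP => i j; rewrite !mxE !enum_rankK. Qed.

Lemma kronmxDl A A' B : kronmx (A + A') B = kronmx A B + kronmx A' B.
Proof. by apply/matrixP => i j; rewrite !mxE mulrDl. Qed.

Lemma kronmxDr A B B' : kronmx A (B + B') = kronmx A B + kronmx A B'.
Proof. by apply/matrixP => i j; rewrite !mxE mulrDr. Qed.

Lemma kronmxBl A A' B : kronmx (A - A') B = kronmx A B - kronmx A' B.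
Proof. by apply/matrixP => i j; rewrite !mxE mulrBl. Qed.

Lemma kronmxBr A B B' : kronmx A (B - B') = kronmx A B - kronmx A B'.
Proof. by apply/matrixP => i j; rewrite !mxE mulrBr. Qed.

Lemma kronmx_mul A B (M : 'M_(#|U1|, #|V1|)) (N : 'M_(#|U2|, #|V2|)) :
  kronmx A B *m kronmx M N = kronmx (A *m M) (B *m N).
Proof.
apply/matrixP => i k; rewrite mxE sum_enum_rank.
pose t x y := kronmx A B i (enum_rank (x, y)) * kronmx M N (enum_rank (x, y)) k.
rewrite (eq_bigr (fun p => t p.1 p.2)); last by case.
rewrite -pair_bigA /t !mxE !sum_enum_rank big_distrl /=; apply: eq_bigr => x _.
rewrite big_distrr /=; apply: eq_bigr => y _.
by rewrite !mxE !enum_rankK /=; ring.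
Qed.

Lemma kronmx1 : kronmx (1%:M : 'M[R]_#|T1|) (1%:M : 'M[R]_#|T2|) = 1%:M.
Proof.
apply/matrixP => i j; rewrite !mxE !(inj_eq enum_rank_inj) -(inj_eq enum_val_inj).
case: (enum_val i) (enum_val j) => [a b] [c d] /=.
by rewrite xpair_eqE -mulnb natrM.
Qed.

End Kronecker.

Section KroneckerChar2.
Variable R : comNzRingType.
Hypothesis pcharR2 : 2 \in [pchar R].

(* Expanding the right-hand side, the cross terms (F1 G1 D1) (x) K and
   H1 (x) D2 each occur twice; they cancel only because the tensor product
   differential carries no Koszul signs, which is why characteristic 2 is
   needed. *)
Lemma htpy_id_kron (T1 T2 U1 U2 : finType) (D1 : 'M[R]_#|T1|) (D1' : 'M[R]_#|U1|)
    (D2 : 'M[R]_#|T2|) F1 G1 H1 (F2 : 'M[R]_(#|T2|, #|U2|)) G2 K :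
  D1 *m F1 = F1 *m D1' -> D1' *m G1 = G1 *m D1 ->
  1%:M - F1 *m G1 = D1 *m H1 + H1 *m D1 -> 1%:M - F2 *m G2 = D2 *m K + K *m D2 ->
  let D := kronmx D1 1%:M + kronmx 1%:M D2 in
  let H := kronmx H1 1%:M + kronmx (F1 *m G1) K in
  1%:M - kronmx F1 F2 *m kronmx G1 G2 = D *m H + H *m D.
Proof.
move=> cF1 cG1 eH1 eK D H.
have cFG1 : D1 *m (F1 *m G1) = F1 *m G1 *m D1 by rewrite mulmxA cF1 -!mulmxA cG1.
have -> : 1%:M - kronmx F1 F2 *m kronmx G1 G2 =
    kronmx (D1 *m H1 + H1 *m D1) 1%:M + kronmx (F1 *m G1) (D2 *m K + K *m D2).
  by rewrite -eH1 -eK kronmx_mul kronmxBl kronmxBr kronmx1 addrA subrK.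
have cancel_pairs (a b c d x y : 'M[R]_#|{: T1 * T2}|) :
    a + b + (c + d) = a + x + (y + c) + (b + y + (x + d)).
  apply/matrixP => i j; rewrite !mxE.
  transitivity (a i j + b i j + (c i j + d i j) + (x i j + x i j) + (y i j + y i j)).
    by rewrite !addrr_pchar2 ?addr0.
  by ring.
rewrite /D /H !mulmxDl !mulmxDr !kronmx_mul !mul1mx !mulmx1 cFG1 kronmxDl kronmxDr.
exact: cancel_pairs.
Qed.

Lemma htpy_equiv_kron (T1 T2 U1 U2 : finType) D1 D1' F1 G1 H1 H1' D2 D2' F2 G2 K K' :
  @htpy_equiv R #|T1| #|U1| D1 D1' F1 G1 H1 H1' ->
  @htpy_equiv R #|T2| #|U2| D2 D2' F2 G2 K K' ->
  htpy_equiv (kronmx D1 1%:M + kronmx 1%:M D2) (kronmx D1' 1%:M + kronmx 1%:M D2')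
    (kronmx F1 F2) (kronmx G1 G2)
    (kronmx H1 1%:M + kronmx (F1 *m G1) K) (kronmx H1' 1%:M + kronmx (G1 *m F1) K').
Proof.
case=> cF1 cG1 eH1 eH1' [cF2 cG2 eK eK']; split.
- by rewrite mulmxDl mulmxDr !kronmx_mul !mul1mx !mulmx1 cF1 cF2.
- by rewrite mulmxDl mulmxDr !kronmx_mul !mul1mx !mulmx1 cG1 cG2.
- exact: htpy_id_kron cF1 cG1 eH1 eK.
- exact: htpy_id_kron cG1 cF1 eH1' eK'.
Qed.

End KroneckerChar2.

(** * Ranks of diagonal and partial permutation matrices *)

Lemma mxrank_mul_tr (F : fieldType) m n (M : 'M[F]_(m, n)) :
  M *m M^T *m M = M -> \rank (M *m M^T) = \rank M.
Proof.
by move=> MMM; apply/eqP; rewrite eqn_leq mxrankM_maxl -{1}MMM mxrankM_maxl.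
Qed.

Lemma mxrank_le_intertwined (F : fieldType) m n (A : 'M[F]_(m, n)) (B : 'M_(n, m)) P P' :
  A *m B = 1%:M -> P *m A = A *m P' -> (\rank P <= \rank P')%N.
Proof.
move=> AB PA; rewrite -[P]mulmx1 -AB mulmxA PA -mulmxA.
exact: leq_trans (mxrankM_maxr _ _) (mxrankM_maxl _ _).
Qed.

Definition predmx (R : pzSemiRingType) (T : finType) (P : pred T) : 'M[R]_#|T| :=
  coefmx (fun x y => ((x == y) && P x)%:R).

Section PredMx.
Variables (R : pzSemiRingType) (T U : finType) (P : pred T).

Lemma predmx_mull (f : T -> U -> R) :
  predmx R P *m coefmx f = coefmx (fun x z => (P x)%:R * f x z).
Proof.
apply/matrixP => i k; rewrite !mxE (sum_enum_rank (fun j => _ * _)).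
rewrite (bigD1 (enum_val i)) //= big1 => [|x /negbTE xi]; last first.
  by rewrite !mxE enum_rankK eq_sym xi mul0r.
by rewrite !mxE !enum_rankK eqxx addr0.
Qed.

Lemma predmx_mulr (f : U -> T -> R) :
  coefmx f *m predmx R P = coefmx (fun x z => f x z * (P z)%:R).
Proof.
apply/matrixP => i k; rewrite !mxE (sum_enum_rank (fun j => _ * _)).
rewrite (bigD1 (enum_val k)) //= big1 => [|x /negbTE xk]; last first.
  by rewrite !mxE enum_rankK xk mulr0.
by rewrite !mxE !enum_rankK eqxx addr0.
Qed.

End PredMx.

Lemma rank_predmx (F : fieldType) (T : finType) (P : pred T) :
  \rank (predmx F P) = #|P|.
Proof.
pose A : 'M[F]_(#|P|, #|T|) := \matrix_(r, i) (enum_val i == enum_val r)%:R.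
have AAt : A *m A^T = 1%:M.
  apply/matrixP => r s; rewrite !mxE (sum_enum_rank (fun i => A r i * A^T i s)).
  rewrite (bigD1 (enum_val r)) //= big1 => [|x /negbTE xr]; last first.
    by rewrite !mxE enum_rankK xr mul0r.
  by rewrite !mxE !enum_rankK eqxx mul1r addr0 (inj_eq enum_val_inj) eq_sym.
have AtA : A^T *m A = predmx F P.
  apply/matrixP => i j; rewrite !mxE; under eq_bigr do rewrite !mxE.
  rewrite -(big_enum_val (A := P) (fun x => (enum_val i == x)%:R * (enum_val j == x)%:R)).
  rewrite big_mkcond (bigD1 (enum_val i)) //= big1 => [|x /negbTE xi]; last first.
    by rewrite eq_sym xi mul0r if_same.
  by rewrite eqxx mul1r addr0 eq_sym unfold_in; case: (P _); rewrite ?andbT ?andbF.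
have rankA : \rank A = #|P|.
  by apply/eqP; rewrite eqn_leq rank_leq_row -{1}(mxrank1 F #|P|) -AAt mxrankM_maxl.
have := mxrank_mul_tr (M := A^T); rewrite trmxK mxrank_tr AtA rankA; apply.
by rewrite -AtA -mulmxA AAt mulmx1.
Qed.

Lemma F2_eq1 (a : 'F_2) : a != 0 -> a = 1.
Proof. by case: a => [[|[|n]]] //= lt_n _; apply/val_inj. Qed.

Lemma natr_mul_neq0 (b : bool) (a : 'F_2) : (b%:R * a != 0) = b && (a != 0).
Proof. by case: b; rewrite ?mul1r ?mul0r ?eqxx. Qed.

Section PartialPermutation.
Variables (T U : finType) (f : T -> U -> 'F_2).
Hypothesis row_uniq : forall x y y', f x y != 0 -> f x y' != 0 -> y = y'.
Hypothesis col_uniq : forall x x' y, f x y != 0 -> f x' y != 0 -> x = x'.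

Let S := [pred x | [exists y, f x y != 0]].

Lemma pperm_mul_tr : coefmx f *m (coefmx f)^T = predmx 'F_2 S.
Proof.
apply/matrixP => i j; rewrite !mxE (sum_enum_rank (fun k => _ * _)).
under eq_bigr do rewrite !mxE !enum_rankK.
set x := enum_val i; set x' := enum_val j.
have [<-|neq] := eqVneq x x'; last first.
  rewrite big1 // => y _; have [->|/col_uniq fx] := eqVneq (f x y) 0; first by rewrite mul0r.
  have [->|/fx xx'] := eqVneq (f x' y) 0; first by rewrite mulr0.
  by rewrite xx' eqxx in neq.
rewrite /S /=; have [/existsP [y0 fy0]|/existsPn nS] := boolP [exists y, f x y != 0].
  rewrite (bigD1 y0) //= (F2_eq1 fy0) mulr1 big1 ?addr0 // => y yy0.
  have [->|/row_uniq /(_ fy0) yy] := eqVneq (f x y) 0; first by rewrite mul0r.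
  by rewrite yy eqxx in yy0.
by rewrite big1 // => y _; move/negPn/eqP: (nS y) => ->; rewrite mul0r.
Qed.

Lemma rank_pperm : \rank (coefmx f) = #|S|.
Proof.
rewrite -mxrank_mul_tr pperm_mul_tr ?rank_predmx // predmx_mull.
apply: eq_coefmx => x z; have [->|nz] := eqVneq (f x z) 0; first by rewrite mulr0.
suff -> : S x by rewrite mul1r.
by apply/existsP; exists z.
Qed.

End PartialPermutation.

Lemma rank_pperm_sel (T U : finType) (P : pred T) (f : T -> U -> 'F_2) :
  (forall x y y', f x y != 0 -> f x y' != 0 -> y = y') ->
  (forall x x' y, f x y != 0 -> f x' y != 0 -> x = x') ->
  \rank (coefmx (fun x y => (P x)%:R * f x y)) =
    #|[pred x | P x && [exists y, f x y != 0]]|.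
Proof.
move=> row_uniq col_uniq; rewrite rank_pperm.
- apply: eq_card => x; rewrite !inE.
  apply/existsP/andP => [[y]|[Px /existsP [y xy]]].
    by rewrite natr_mul_neq0 => /andP [-> xy]; split=> //; apply/existsP; exists y.
  by exists y; rewrite natr_mul_neq0 Px.
- by move=> x y y'; rewrite !natr_mul_neq0 => /andP [_ /row_uniq] + /andP [_]; apply.
- by move=> x x' y; rewrite !natr_mul_neq0 => /andP [_ /col_uniq] + /andP [_]; apply.
Qed.

(** * Filtered maps and their homotopy equivalences *)

Definition fhom (C C' : cx) (k : int) (f : gen C -> gen C' -> 'F_2) :=
  forall x y, f x y != 0 -> gr C' y = gr C x + k /\ (flv C' y <= flv C x)%R.

Lemma sumr_neq0 (R : nmodType) (I : finType) (F : I -> R) :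
  \sum_i F i != 0 -> exists i, F i != 0.
Proof.
move=> nz; apply/existsP; apply: contraR nz => /existsPn F0.
by rewrite big1 // => i _; apply/eqP/negbNE/F0.
Qed.

Lemma fhom_mcomp (C C' C'' : cx) k k' f g :
  @fhom C C' k f -> @fhom C' C'' k' g -> fhom (k + k') (mcomp f g).
Proof.
move=> fk gk' x z /sumr_neq0 [y].
rewrite mulf_eq0 negb_or => /andP [/fk [gr1 le1] /gk' [gr2 le2]].
by rewrite gr2 gr1 addrA (le_trans le2 le1).
Qed.

Lemma fhomD (C C' : cx) k f g :
  @fhom C C' k f -> fhom k g -> fhom k (fun x y => f x y + g x y).
Proof.
move=> fk gk x y; have [f0|/fk fxy _] := eqVneq (f x y) 0; last exact: fxy.
by rewrite f0 add0r => /gk.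
Qed.

Lemma fhom_idm (C : cx) : @fhom C C 0 (@idm _).
Proof. by move=> x y; rewrite /idm; have [->|_] := eqVneq x y; rewrite ?addr0 ?eqxx. Qed.

Lemma fhom_tensor (C1 C2 C1' C2' : cx) k k' f g :
  @fhom C1 C1' k f -> @fhom C2 C2' k' g ->
  @fhom (tensor C1 C2) (tensor C1' C2') (k + k') (fun p q => f p.1 q.1 * g p.2 q.2).
Proof.
move=> fk gk' [x1 x2] [y1 y2] /=.
rewrite mulf_eq0 negb_or => /andP [/fk [gr1 le1] /gk' [gr2 le2]].
by rewrite gr1 gr2 addrACA lerD.
Qed.

Lemma cx_fhom (C : cx) : is_cx C -> fhom (-1) (dif C).
Proof. by case=> dC _ x y /dC. Qed.

Lemma cx_dd (C : cx) : is_cx C -> coefmx (dif C) *m coefmx (dif C) = 0.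
Proof.
case=> _ ddC; rewrite -coefmx_mcomp (eq_coefmx ddC).
by apply/matrixP => i j; rewrite !mxE.
Qed.

Lemma coefmx_dif_tensor (C1 C2 : cx) :
  coefmx (dif (tensor C1 C2)) =
    kronmx (coefmx (dif C1)) 1%:M + kronmx 1%:M (coefmx (dif C2)).
Proof. by rewrite -!coefmx_idm -!coefmx_kron -coefmxD. Qed.

Definition fhe_mx (C C' : cx) :=
  exists (f : gen C -> gen C' -> 'F_2) (g : gen C' -> gen C -> 'F_2)
         (h : gen C -> gen C -> 'F_2) (h' : gen C' -> gen C' -> 'F_2),
    [/\ fhom 0 f, fhom 0 g, fhom 1 h & fhom 1 h'] /\
    htpy_equiv (coefmx (dif C)) (coefmx (dif C'))
      (coefmx f) (coefmx g) (coefmx h) (coefmx h').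

Lemma fhe_mx_of_fhe C C' : fhe C C' -> fhe_mx C C'.
Proof.
have fmap_mx (D D' : cx) f : @fmap D D' f ->
    fhom 0 f /\ coefmx (dif D) *m coefmx f = coefmx f *m coefmx (dif D').
  case=> fk cf; split; first by move=> x y /fk [-> ->]; rewrite addr0.
  by rewrite -!coefmx_mcomp; apply: eq_coefmx.
case=> f [g [h [h' [[/fmap_mx [f0 cf] /fmap_mx [g0 cg] h1 h1'] [eh eh']]]]].
exists f, g, h, h'; split=> //; split=> //.
  by rewrite -coefmx_idm -!coefmx_mcomp -coefmxB -coefmxD; apply: eq_coefmx.
by rewrite -coefmx_idm -!coefmx_mcomp -coefmxB -coefmxD; apply: eq_coefmx.
Qed.

Lemma fhe_mx_sym C C' : fhe_mx C C' -> fhe_mx C' C.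
Proof.
by case=> f [g [h [h' [[f0 g0 h1 h1'] /htpy_equiv_sym e]]]]; exists g, f, h', h.
Qed.

Lemma fhe_mx_trans C C' C'' : fhe_mx C C' -> fhe_mx C' C'' -> fhe_mx C C''.
Proof.
case=> f [g [h [h' [[f0 g0 h1 h1'] e]]]] [f2 [g2 [k [k' [[f20 g20 k1 k1'] e2]]]]].
exists (mcomp f f2), (mcomp g2 g),
  (fun x z => h x z + mcomp (mcomp f k) g x z),
  (fun x z => k' x z + mcomp (mcomp g2 h') f2 x z).
split; last by rewrite !coefmxD !coefmx_mcomp; exact: htpy_equiv_comp e e2.
split; [exact: fhom_mcomp f0 f20 | exact: fhom_mcomp g20 g0 | |].
- by apply: fhomD h1 _; have := fhom_mcomp (fhom_mcomp f0 k1) g0; rewrite add0r addr0.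
- by apply: fhomD k1' _; have := fhom_mcomp (fhom_mcomp g20 h1') f20; rewrite add0r addr0.
Qed.

Lemma fhe_mx_tensor C1 C1' C2 C2' :
  fhe_mx C1 C1' -> fhe_mx C2 C2' -> fhe_mx (tensor C1 C2) (tensor C1' C2').
Proof.
case=> f1 [g1 [h1 [h1' [[f10 g10 h11 h11'] e1]]]].
case=> f2 [g2 [k [k' [[f20 g20 k1 k1'] e2]]]].
exists (fun p q => f1 p.1 q.1 * f2 p.2 q.2), (fun p q => g1 p.1 q.1 * g2 p.2 q.2),
  (fun p q => h1 p.1 q.1 * idm p.2 q.2 + mcomp f1 g1 p.1 q.1 * k p.2 q.2),
  (fun p q => h1' p.1 q.1 * idm p.2 q.2 + mcomp g1 f1 p.1 q.1 * k' p.2 q.2).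
split.
  split; [exact: fhom_tensor f10 f20 | exact: fhom_tensor g10 g20 | |].
  - apply: fhomD; first by have := fhom_tensor h11 (@fhom_idm C2); rewrite addr0.
    by have := fhom_tensor (fhom_mcomp f10 g10) k1; rewrite !add0r.
  - apply: fhomD; first by have := fhom_tensor h11' (@fhom_idm C2'); rewrite addr0.
    by have := fhom_tensor (fhom_mcomp g10 f10) k1'; rewrite !add0r.
rewrite !coefmx_dif_tensor !coefmxD !coefmx_kron !coefmx_idm !coefmx_mcomp.
apply: htpy_equiv_kron e1 e2; exact: pchar_Fp.
Qed.

(** * Invariance of homology *)

Lemma grprojE (C : cx) g : grproj C g = predmx 'F_2 [pred x | gr C x == g].
Proof. by apply/matrixP => i j; rewrite !mxE (inj_eq enum_val_inj). Qed.

Lemma rank_grproj (C : cx) g : \rank (grproj C g) = #|[pred x | gr C x == g]|.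
Proof. by rewrite grprojE rank_predmx. Qed.

Lemma grproj_fhom (C C' : cx) k f g :
  @fhom C C' k f -> grproj C g *m coefmx f = coefmx f *m grproj C' (g + k).
Proof.
move=> fk; rewrite !grprojE predmx_mull predmx_mulr; apply: eq_coefmx => x y /=.
have [->|/fk [-> _]] := eqVneq (f x y) 0; first by rewrite mulr0 mul0r.
by rewrite (inj_eq (addIr k)) mulrC.
Qed.

Section HomologyInvariance.
Variables (K : fieldType) (n n' : nat) (D : 'M[K]_n) (D' : 'M[K]_n').
Variables (P : int -> 'M[K]_n) (P' : int -> 'M[K]_n').
Variables (F : 'M[K]_(n, n')) (G : 'M[K]_(n', n)) (H : 'M[K]_n).
Hypothesis DD' : D' *m D' = 0.
Hypothesis PD : forall g, P g *m D = D *m P (g - 1).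
Hypothesis PD' : forall g, P' g *m D' = D' *m P' (g - 1).
Hypothesis PF : forall g, P g *m F = F *m P' g.
Hypothesis PG : forall g, P' g *m G = G *m P g.
Hypothesis PH : forall g, P g *m H = H *m P (g + 1).
Hypotheses (cF : D *m F = F *m D') (cG : D' *m G = G *m D).
Hypothesis eH : 1%:M - F *m G = D *m H + H *m D.
Variable g : int.

(* Row spaces of the cycles and of the boundaries in grading g. *)
Let Z := (P g :&: kermx D)%MS.
Let B := D *m P g.
Let Z' := (P' g :&: kermx D')%MS.
Let B' := D' *m P' g.

Lemma cycles_sub : (Z <= Z' *m G + B)%MS.
Proof.
have ZD : Z *m D = 0 by apply/sub_kermxP; exact: capmxSr.
have /submxP [W ZW] : (Z <= P g)%MS by exact: capmxSl.
have -> : Z = Z *m F *m G + Z *m H *m D.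
  have e1 : 1%:M = F *m G + (D *m H + H *m D) by rewrite -eH addrC subrK.
  by rewrite -{1}[Z]mulmx1 e1 !mulmxDr !mulmxA ZD mul0mx add0r.
apply: addmx_sub_adds.
  apply: submxMr; rewrite sub_capmx; apply/andP; split.
    by rewrite ZW -mulmxA PF mulmxA submxMl.
  by apply/sub_kermxP; rewrite -mulmxA -cF mulmxA ZD mul0mx.
have -> : Z *m H *m D = W *m H *m (D *m P g).
  by rewrite ZW -(mulmxA W) PH mulmxA -(mulmxA (W *m H)) PD addrK.
exact: submxMl.
Qed.

Lemma boundaries_sub : (B' <= Z')%MS.
Proof.
rewrite sub_capmx submxMl /=; apply/sub_kermxP.
by rewrite /B' -mulmxA PD' mulmxA DD' mul0mx.
Qed.

Lemma boundaries_mul_sub : (B' *m G <= B)%MS.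
Proof. by rewrite /B' -mulmxA PG mulmxA cG -mulmxA submxMl. Qed.

Lemma homology_rank_le : (\rank Z - \rank B <= \rank Z' - \rank B')%N.
Proof.
have := mxrankS cycles_sub.
have := mxrank_sum_cap (Z' *m G) B.
have := mxrank_mul_ker Z' G.
have := mxrank_mul_ker B' G.
have : (\rank (B' *m G) <= \rank (Z' *m G :&: B))%N.
  by apply: mxrankS; rewrite sub_capmx boundaries_mul_sub submxMr ?boundaries_sub.
have : (\rank (B' :&: kermx G) <= \rank (Z' :&: kermx G))%N.
  by apply/mxrankS/capmxS; rewrite ?boundaries_sub.
have : (\rank (Z' *m G :&: B) <= \rank (Z' *m G))%N by apply/mxrankS/capmxSl.
lia.
Qed.

End HomologyInvariance.

Lemma homdimE (C : cx) g :
  homdim C g =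
    (\rank (grproj C g :&: kermx (difmx C)) - \rank (difmx C *m grproj C g))%N.
Proof. by rewrite /homdim -rank_grproj -(mxrank_mul_ker _ (difmx C)) addKn. Qed.

Lemma homdim_le (C C' : cx) g : is_cx C -> is_cx C' -> fhe_mx C C' ->
  (homdim C g <= homdim C' g)%N.
Proof.
move=> cC cC' [f [f' [h [h' [[f0 f'0 h1 _] [cf cf' eh _]]]]]]; rewrite !homdimE.
apply: (homology_rank_le (P := grproj C) (P' := grproj C') (cx_dd cC') _ _ _ _ _ cf cf' eh).
- by move=> k; rewrite (grproj_fhom _ (cx_fhom cC)).
- by move=> k; rewrite (grproj_fhom _ (cx_fhom cC')).
- by move=> k; rewrite (grproj_fhom _ f0) addr0.
- by move=> k; rewrite (grproj_fhom _ f'0) addr0.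
- by move=> k; exact: grproj_fhom.
Qed.

Lemma homdim_fhe_mx (C C' : cx) g : is_cx C -> is_cx C' -> fhe_mx C C' ->
  homdim C g = homdim C' g.
Proof.
by move=> cC cC' e; apply/eqP; rewrite eqn_leq !homdim_le //; exact: fhe_mx_sym.
Qed.

(** * Graded dimensions of reduced complexes *)

Definition reduced (C : cx) := forall x y, dif C x y != 0 -> (flv C y < flv C x)%R.

Definition assoc_gr (C C' : cx) (A : 'M['F_2]_(#|gen C|, #|gen C'|)) :
    'M['F_2]_(#|gen C|, #|gen C'|) :=
  \matrix_(i, j) (A i j * (flv C' (enum_val j) == flv C (enum_val i))%:R).

Lemma assoc_grE (C C' : cx) (f : gen C -> gen C' -> 'F_2) :
  assoc_gr (coefmx f) = coefmx (fun x y => f x y * (flv C' y == flv C x)%:R).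
Proof. by apply/matrixP => i j; rewrite !mxE. Qed.

Lemma assoc_grD (C C' : cx) (A B : 'M_(#|gen C|, #|gen C'|)) :
  assoc_gr (A + B) = assoc_gr A + assoc_gr B.
Proof. by apply/matrixP => i j; rewrite !mxE mulrDl. Qed.

Lemma assoc_grB (C C' : cx) (A B : 'M_(#|gen C|, #|gen C'|)) :
  assoc_gr (A - B) = assoc_gr A - assoc_gr B.
Proof. by apply/matrixP => i j; rewrite !mxE mulrBl. Qed.

Lemma assoc_gr1 (C : cx) : @assoc_gr C C 1%:M = 1%:M.
Proof.
by apply/matrixP => i j; rewrite !mxE; case: eqP => [->|]; rewrite ?eqxx ?mulr1 ?mul0r.
Qed.

Lemma assoc_grM (C C' C'' : cx) k k' f g : @fhom C C' k f -> @fhom C' C'' k' g ->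
  assoc_gr (coefmx f *m coefmx g) = assoc_gr (coefmx f) *m assoc_gr (coefmx g).
Proof.
move=> fk gk'; rewrite -coefmx_mcomp !assoc_grE -coefmx_mcomp.
apply: eq_coefmx => x z; rewrite /mcomp big_distrl /=; apply: eq_bigr => y _.
have [->|/fk [_ le1]] := eqVneq (f x y) 0; first by rewrite !mul0r.
have [->|/gk' [_ le2]] := eqVneq (g y z) 0; first by rewrite mulr0 !mul0r mulr0.
suff -> : (flv C'' z == flv C x) = (flv C' y == flv C x) && (flv C'' z == flv C' y).
  by rewrite -mulnb natrM mulrACA.
apply/eqP/andP => [zx|[/eqP -> /eqP ->] //].
have yx : flv C' y = flv C x by apply/le_anti; rewrite le1 -zx.
by rewrite yx zx.
Qed.

Lemma assoc_gr_reduced (C : cx) : reduced C -> assoc_gr (coefmx (dif C)) = 0.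
Proof.
move=> rC; rewrite assoc_grE; apply/matrixP => i j; rewrite !mxE.
have [->|/rC] := eqVneq (dif C (enum_val i) (enum_val j)) 0; first by rewrite mul0r.
by rewrite lt_neqAle => /andP [/negbTE -> _]; rewrite mulr0.
Qed.

Lemma grproj_assoc_gr (C C' : cx) f g : @fhom C C' 0 f ->
  grproj C g *m assoc_gr (coefmx f) = assoc_gr (coefmx f) *m grproj C' g.
Proof.
move=> f0; rewrite assoc_grE -[in grproj C' g](addr0 g); apply: grproj_fhom => x y.
by rewrite mulf_eq0 negb_or => /andP [/f0].
Qed.

Lemma assoc_gr_mul_eq1 (C C' : cx) f g h : fhom (-1) (dif C) -> reduced C ->
  @fhom C C' 0 f -> @fhom C' C 0 g -> @fhom C C 1 h ->
  1%:M - coefmx f *m coefmx g = coefmx (dif C) *m coefmx h + coefmx h *m coefmx (dif C) ->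
  assoc_gr (coefmx f) *m assoc_gr (coefmx g) = 1%:M.
Proof.
move=> dC rC f0 g0 h1 /(congr1 (@assoc_gr C C)).
rewrite assoc_grB assoc_grD assoc_gr1 !(assoc_grM f0 g0, assoc_grM dC h1, assoc_grM h1 dC).
by rewrite assoc_gr_reduced // mul0mx mulmx0 addr0 => /eqP; rewrite subr_eq0 => /eqP <-.
Qed.

Lemma fhe_mx_reduced_card (C C' : cx) g :
  fhom (-1) (dif C) -> fhom (-1) (dif C') -> reduced C -> reduced C' -> fhe_mx C C' ->
  #|[pred x | gr C x == g]| = #|[pred x | gr C' x == g]|.
Proof.
move=> dC dC' rC rC' [f [f' [h [h' [[f0 f'0 h1 h'1] [_ _ eh eh']]]]]].
have FG := assoc_gr_mul_eq1 dC rC f0 f'0 h1 eh.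
have GF := assoc_gr_mul_eq1 dC' rC' f'0 f0 h'1 eh'.
apply/eqP; rewrite -!rank_grproj eqn_leq.
by rewrite (mxrank_le_intertwined FG (grproj_assoc_gr g f0))
           (mxrank_le_intertwined GF (grproj_assoc_gr g f'0)).
Qed.

Section Tensor.
Variables C1 C2 : cx.

Lemma dif_tensor_neq0 x1 x2 y1 y2 : dif (tensor C1 C2) (x1, x2) (y1, y2) != 0 ->
  (dif C1 x1 y1 != 0 /\ x2 = y2) \/ (x1 = y1 /\ dif C2 x2 y2 != 0).
Proof.
rewrite /=; have [d1 | d1] := eqVneq (dif C1 x1 y1) 0.
  rewrite d1 mul0r add0r.
  by have [<- | _] := eqVneq x1 y1; rewrite ?mul1r ?mul0r ?eqxx //; right.
have [<- | _] := eqVneq x2 y2; first by left.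
by have [<- | _] := eqVneq x1 y1; rewrite ?mul1r ?mul0r ?mulr0 ?add0r ?eqxx //; right.
Qed.

Lemma reduced_tensor : reduced C1 -> reduced C2 -> reduced (tensor C1 C2).
Proof.
move=> r1 r2 [x1 x2] [y1 y2] /dif_tensor_neq0 [[/r1 lt1 <-] | [<- /r2 lt2]] /=.
- by rewrite ltrD2r.
- by rewrite ltrD2l.
Qed.

Lemma fhom_dif_tensor :
  fhom (-1) (dif C1) -> fhom (-1) (dif C2) -> fhom (-1) (dif (tensor C1 C2)).
Proof.
move=> d1 d2 [x1 x2] [y1 y2] /dif_tensor_neq0 [[/d1 [gr1 le1] <-] | [<- /d2 [gr2 le2]]] /=.
- by rewrite gr1 addrAC lerD2r.
- by rewrite gr2 addrA lerD2l.
Qed.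

Lemma sum_gr_tensor (R : nmodType) (w : int -> R) :
  \sum_(p : gen (tensor C1 C2)) w (gr (tensor C1 C2) p) =
  \sum_(x : gen C1) \sum_(y : gen C2) w (gr C1 x + gr C2 y).
Proof. by rewrite pair_bigA. Qed.

End Tensor.

(** * Bar complexes *)

Definition homology_F2 (C : cx) := forall g : int, homdim C g = (g == 0 : nat).

Section BarComplex.
Variable B : cx.
Hypothesis bB : is_barcx B.

Definition bar_top (x : gen B) := [exists y, dif B x y != 0].
Definition bar_bot (y : gen B) := [exists x, dif B x y != 0].
Definition isolated (x : gen B) := ~~ bar_top x && ~~ bar_bot x.

Lemma bar_top_bot x : bar_top x -> bar_bot x = false.
Proof.
case: bB => _ _ _ _ tb /existsP [y xy]; apply/negbTE/existsPn => z.
by have [-> _] := tb _ _ z xy; rewrite eqxx.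
Qed.

Lemma rank_grproj_dif g :
  \rank (grproj B g *m difmx B) = #|[pred x | (gr B x == g) && bar_top x]|.
Proof. by case: bB => _ _ row_uniq col_uniq _; rewrite grprojE predmx_mull rank_pperm_sel. Qed.

Lemma rank_dif_grproj g :
  \rank (difmx B *m grproj B g) = #|[pred y | (gr B y == g) && bar_bot y]|.
Proof.
case: bB => _ _ row_uniq col_uniq _.
rewrite -mxrank_tr grprojE predmx_mulr coefmx_tr (eq_coefmx (fun y x => mulrC _ _)).
by rewrite rank_pperm_sel // => y x x'; [apply: col_uniq | apply: row_uniq].
Qed.

Lemma barcx_homdim g : homdim B g = #|[pred x | (gr B x == g) && isolated x]|.
Proof.
set A := [pred x | gr B x == g].
rewrite /homdim rank_grproj_dif rank_dif_grproj.
rewrite -(cardID bar_top A) -(cardID bar_bot [predD A & bar_top]).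
have -> : #|[predI [predD A & bar_top] & bar_bot]| =
    #|[pred y | (gr B y == g) && bar_bot y]|.
  apply: eq_card => y; rewrite !inE -!topredE /=.
  by have [/bar_top_bot ->|] := boolP (bar_top y); rewrite ?andbF.
have -> : #|[predI A & bar_top]| = #|[pred x | (gr B x == g) && bar_top x]| by [].
rewrite !addKn; apply: eq_card => x; rewrite !inE -!topredE /= /isolated.
by case: (gr B x == g); case: (bar_top x); case: (bar_bot x).
Qed.

End BarComplex.

Lemma natr_card (R : pzSemiRingType) (T : finType) (P : pred T) :
  #|P|%:R = \sum_x (P x)%:R :> R.
Proof.
rewrite -sum1_card (big_morph _ (@natrD R) (erefl _)) big_mkcond /=.
by apply: eq_bigr => x _; rewrite unfold_in; case: (P x).
Qed.

Lemma sum_natr_uniq (R : pzSemiRingType) (T : finType) (P : pred T) :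
  (forall x y, P x -> P y -> x = y) -> \sum_x (P x)%:R = [exists x, P x]%:R :> R.
Proof.
move=> uP; case: existsP => [[x0 Px0]|nP]; last first.
  by rewrite big1 // => x _; case Px: (P x) => //; case: nP; exists x.
rewrite (bigD1 x0) //= Px0 big1 ?addr0 // => x xx0.
by case Px: (P x) => //; rewrite (uP _ _ Px Px0) eqxx in xx0.
Qed.

Section BarCounting.
Variables (B : cx) (R : pzSemiRingType).
Hypotheses (bB : is_barcx B) (hB : homology_F2 B).

Lemma isolated_gr x : isolated x -> gr B x = 0.
Proof.
move=> ix; apply/eqP; apply: contraT => gx.
have := hB (gr B x); rewrite barcx_homdim // (negbTE gx) => /card0_eq/(_ x).
by rewrite inE eqxx ix.
Qed.

Lemma sum_isolated (w : int -> R) : \sum_(x : gen B) (isolated x)%:R * w (gr B x) = w 0.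
Proof.
transitivity (\sum_(x : gen B) (isolated x)%:R * w 0).
  by apply: eq_bigr => x _; case ix: (isolated x); rewrite ?mul0r ?(isolated_gr ix).
have iso1 : #|[pred x : gen B | isolated x]| = 1%N.
  have := hB 0; rewrite barcx_homdim // eqxx /= => <-; apply: eq_card => x.
  by rewrite !inE; case ix: (isolated x); rewrite ?(isolated_gr ix) ?andbF.
by rewrite -mulr_suml -natr_card iso1 mul1r.
Qed.

Lemma sum_bar_top (w : int -> R) :
  \sum_x (bar_top x)%:R * w (gr B x) = \sum_y (bar_bot y)%:R * w (gr B y + 1).
Proof.
case: bB => [[grd _] _ row_uniq col_uniq _].
transitivity (\sum_x \sum_y (dif B x y != 0)%:R * w (gr B y + 1)).
  apply: eq_bigr => x _.
  rewrite /bar_top -(sum_natr_uniq R (row_uniq x)) big_distrl /=.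
  apply: eq_bigr => y _; case: (boolP (dif B x y != 0)) => [/grd [-> _]|_].
    by rewrite subrK.
  by rewrite !mul0r.
rewrite exchange_big /=; apply: eq_bigr => y _.
by rewrite /bar_bot -(sum_natr_uniq R (fun x x' => col_uniq x x' y)) big_distrl.
Qed.

Lemma sum_gr_barcx (w : int -> R) :
  \sum_x w (gr B x) = w 0 + \sum_y (bar_bot y)%:R * (w (gr B y) + w (gr B y + 1)).
Proof.
have kind (x : gen B) : (isolated x)%:R + (bar_top x)%:R + (bar_bot x)%:R = 1 :> R.
  rewrite /isolated; case tx: (bar_top x); first by rewrite (bar_top_bot bB tx) addr0 add0r.
  by case: (bar_bot x); rewrite ?addr0 ?add0r.
rewrite -[LHS](eq_bigr _ (fun x _ => mul1r (w (gr B x)))).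
under eq_bigr => x _ do rewrite -(kind x) !mulrDl.
rewrite !big_split /= sum_isolated sum_bar_top -addrA -big_split /=.
by congr (_ + _); apply: eq_bigr => y _; rewrite mulrDr addrC.
Qed.

End BarCounting.

Definition sgn (g : int) : rat := (-1) ^ g.

Lemma sgnE g : sgn g = if odd `|g|%N then -1 else 1.
Proof.
rewrite /sgn; case: g => n /=; first by rewrite -exprnP -signr_odd; case: odd.
by rewrite NegzE -exprnN invr_sign -signr_odd /=; case: odd.
Qed.

Lemma sgnD a b : sgn (a + b) = sgn a * sgn b.
Proof. by rewrite /sgn expfzDr // oppr_eq0 oner_eq0. Qed.

Lemma sgnS g : sgn (g + 1) = - sgn g.
Proof. by rewrite sgnD /sgn expr1z mulrN1. Qed.

Section BarInvariants.
Variable B : cx.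
Hypotheses (bB : is_barcx B) (hB : homology_F2 B).

Lemma sum_bar_bot : \sum_(y : gen B) (bar_bot y)%:R = (bars_e B)%:R + (bars_o B)%:R :> rat.
Proof.
rewrite !natr_card -big_split; apply: eq_bigr => y _ /=.
by rewrite -/(bar_bot y); case: (bar_bot y); case: (odd _).
Qed.

Lemma sum_bar_bot_sgn :
  \sum_(y : gen B) (bar_bot y)%:R * sgn (gr B y) = (bars_e B)%:R - (bars_o B)%:R.
Proof.
rewrite !natr_card -sumrB; apply: eq_bigr => y _ /=.
rewrite sgnE -/(bar_bot y); case: (bar_bot y); case: (odd _).
all: by rewrite /= ?mul1r ?mul0r ?subr0 ?sub0r.
Qed.

Lemma delta_barcx : (delta B)%:R = 1 + 2 * ((bars_e B)%:R + (bars_o B)%:R) :> rat.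
Proof.
rewrite /delta natr_card (sum_gr_barcx bB hB (fun=> 1)) -sum_bar_bot mulr_sumr.
by congr (_ + _); apply: eq_bigr => y _; rewrite mulrC.
Qed.

Lemma euler_barcx : \sum_x sgn (gr B x) = 1.
Proof.
by rewrite (sum_gr_barcx bB hB sgn) big1 ?addr0 // => y _; rewrite sgnS subrr mulr0.
Qed.

Lemma sum_sgn_gr_barcx :
  \sum_x sgn (gr B x) * (gr B x)%:~R = (bars_o B)%:R - (bars_e B)%:R.
Proof.
rewrite (sum_gr_barcx bB hB (fun g => sgn g * g%:~R)) mulr0 add0r.
rewrite -[RHS]opprB -sum_bar_bot_sgn -sumrN.
by apply: eq_bigr => y _; rewrite sgnS rmorphD /=; ring.
Qed.

End BarInvariants.

Lemma sum_by_fibres (R : pzSemiRingType) (T : finType) (gT : T -> int) (s : seq int)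
    (w : int -> R) : uniq s -> (forall x, gT x \in s) ->
  \sum_x w (gT x) = \sum_(g <- s) #|[pred x | gT x == g]|%:R * w g.
Proof.
move=> us sT; under [RHS]eq_bigr do rewrite natr_card mulr_suml.
rewrite exchange_big /=; apply: eq_bigr => x _.
rewrite (bigD1_seq (gT x)) //= eqxx mul1r big1 ?addr0 // => g /negbTE.
by rewrite eq_sym => ->; rewrite mul0r.
Qed.

Lemma sum_by_grading (R : pzSemiRingType) (T U : finType) (gT : T -> int) (gU : U -> int)
    (w : int -> R) :
  (forall g, #|[pred x | gT x == g]| = #|[pred y | gU y == g]|) ->
  \sum_x w (gT x) = \sum_y w (gU y).
Proof.
move=> card_gr; have us := undup_uniq (codom gT ++ codom gU).
rewrite (sum_by_fibres w us) ?(sum_by_fibres w us).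
- by apply: eq_bigr => g _; rewrite card_gr.
- by move=> y; rewrite mem_undup mem_cat codom_f orbT.
- by move=> x; rewrite mem_undup mem_cat codom_f.
Qed.

Lemma sum_sgn_gr_add (T U : finType) (a : T -> int) (b : U -> int) :
  \sum_x \sum_y sgn (a x + b y) * (a x + b y)%:~R =
  (\sum_x sgn (a x) * (a x)%:~R) * (\sum_y sgn (b y)) +
  (\sum_x sgn (a x)) * (\sum_y sgn (b y) * (b y)%:~R).
Proof.
rewrite !big_distrl -big_split /=; apply: eq_bigr => x _.
rewrite !big_distrr -big_split /=; apply: eq_bigr => y _.
by rewrite sgnD rmorphD /=; ring.
Qed.

Lemma bars_tensor (B1 B2 B12 : cx) :
  is_barcx B1 -> is_barcx B2 -> is_barcx B12 ->
  homology_F2 B1 -> homology_F2 B2 -> homology_F2 B12 ->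
  (forall g, #|[pred x | gr B12 x == g]| = #|[pred p | gr (tensor B1 B2) p == g]|) ->
  [/\ delta B12 = (delta B1 * delta B2)%N,
      (bars_e B12)%:Q = (bars_e B1)%:Q + (bars_e B2)%:Q
                        + 1/4 * ((delta B1)%:Q - 1) * ((delta B2)%:Q - 1) &
      (bars_o B12)%:Q = (bars_o B1)%:Q + (bars_o B2)%:Q
                        + 1/4 * ((delta B1)%:Q - 1) * ((delta B2)%:Q - 1)].
Proof.
move=> b1 b2 b12 h1 h2 h12 card12.
have delta12 : delta B12 = (delta B1 * delta B2)%N.
  apply/eqP; rewrite /delta -card_prod -(eqr_nat rat) -!sumr_const.
  exact/eqP/(sum_by_grading (fun=> 1) card12).
have W := sum_by_grading (fun g => sgn g * g%:~R) card12.
rewrite (sum_gr_tensor _ _ (fun g => sgn g * g%:~R)) sum_sgn_gr_add in W.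
rewrite !sum_sgn_gr_barcx // !euler_barcx // in W.
have := delta_barcx b12 h12; rewrite delta12 natrM !delta_barcx // => D12.
by rewrite -!pmulrn !delta_barcx //; split=> //; nra.
Qed.

Unset Implicit Arguments.

Theorem mainTheorem5
  (Knot : Type) (csum : Knot -> Knot -> Knot) (CFK : Knot -> cx)
  (CFK_cx : forall K, is_cx (CFK K))
  (CFK_hom : forall K (g : int), homdim (CFK K) g = nat_of_bool (g == 0))
  (CFK_sum : forall K1 K2, fhe (CFK (csum K1 K2)) (tensor (CFK K1) (CFK K2)))
  (K1 K2 : Knot) (B1 B2 B12 : cx)
  (bar1 : is_barcx B1) (bar2 : is_barcx B2) (bar12 : is_barcx B12)
  (e1 : fhe B1 (CFK K1)) (e2 : fhe B2 (CFK K2)) (e12 : fhe B12 (CFK (csum K1 K2))) :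
  [/\ delta B12 = (delta B1 * delta B2)%N,
      (bars_e B12)%:Q = (bars_e B1)%:Q + (bars_e B2)%:Q
                        + 1/4 * ((delta B1)%:Q - 1) * ((delta B2)%:Q - 1) &
      (bars_o B12)%:Q = (bars_o B1)%:Q + (bars_o B2)%:Q
                        + 1/4 * ((delta B1)%:Q - 1) * ((delta B2)%:Q - 1)].
Proof.
have bar_hom B K : is_barcx B -> fhe B (CFK K) -> homology_F2 B.
  case=> cB _ _ _ _ /fhe_mx_of_fhe e g.
  by rewrite (homdim_fhe_mx g cB (CFK_cx K) e) CFK_hom.
have dif_bar B : is_barcx B -> fhom (-1) (dif B) by case=> /cx_fhom.
have reduced_bar B : is_barcx B -> reduced B by case.
have e12T : fhe_mx B12 (tensor B1 B2).
  apply: fhe_mx_trans (fhe_mx_of_fhe e12) (fhe_mx_trans (fhe_mx_of_fhe (CFK_sum K1 K2)) _).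
  exact: fhe_mx_sym (fhe_mx_tensor (fhe_mx_of_fhe e1) (fhe_mx_of_fhe e2)).
apply: bars_tensor (bar_hom _ _ bar1 e1) (bar_hom _ _ bar2 e2) (bar_hom _ _ bar12 e12) _ => //.
move=> g; apply: fhe_mx_reduced_card e12T.
- exact: dif_bar.
- exact: fhom_dif_tensor (dif_bar _ bar1) (dif_bar _ bar2).
- exact: reduced_bar.
- exact: reduced_tensor (reduced_bar _ bar1) (reduced_bar _ bar2).
Qed.
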